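(* Let $(P,\leqslant)$ be a conditionally-complete poset and let $P^* := \{x \in P : \exists\, y \in P,\ y \ll x\}$. Then for every directed subset $D$ of $P$ that is bounded above in $P$ and such that $D \cap P^*$ is nonempty, the set $D \cap P^*$ is directed and $\bigvee D = \bigvee (D \cap P^* )$ (suprema taken in $P$).
   Context: A poset is conditionally-complete if every nonempty subset bounded above has a supremum. A nonempty subset $D$ is directed if any two elements of $D$ have an upper bound in $D$. For $x,y \in P$, $x$ is way-below $y$, written $x \ll y$, if for every directed subset $D$ of $P$ bounded above with supremum $d_0$, $y \leqslant d_0$ implies $x \leqslant d$ for some $d \in D$. *)

From mathcomp Require Import all_boot all_order.
Set Implicit Arguments. Unset Strict Implicit. Unset Printing Implicit Defensive.
Import Order.TTheory.
Local Open Scope order_scope.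

Section PosetDefs.
Context {d : Order.disp_t} {T : porderType d}.

Definition upper_bound (A : T -> Prop) (u : T) : Prop :=
  forall a, A a -> a <= u.

Definition bounded_above (A : T -> Prop) : Prop := exists u, upper_bound A u.

Definition is_sup (A : T -> Prop) (s : T) : Prop :=
  upper_bound A s /\ forall u, upper_bound A u -> s <= u.

Definition cond_complete : Prop :=
  forall A : T -> Prop, (exists a, A a) -> bounded_above A -> exists s, is_sup A s.

Definition directed (D : T -> Prop) : Prop :=
  (exists x, D x) /\
  forall x y, D x -> D y -> exists z, D z /\ x <= z /\ y <= z.

Definition way_below (x y : T) : Prop :=
  forall (D : T -> Prop) (d0 : T),
    directed D -> bounded_above D -> is_sup D d0 ->
    y <= d0 -> exists d, D d /\ x <= d.

Definition Pstar (x : T) : Prop := exists y, way_below y x.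

End PosetDefs.

From mathcomp Require Import all_boot all_order.
Local Open Scope order_scope.
Import Order.TTheory.

Set Implicit Arguments.
Unset Strict Implicit.

(* P^* is an up-set, so once D meets P^* in some x0, every x in D lies below
   an upper bound in D of x and x0, which is again in P^*.  Thus D ∩ P^* is
   cofinal in D: it is directed and has the same upper bounds as D, hence the
   same supremum, which exists by conditional completeness. *)

Section CofinalSubset.
Context {d : Order.disp_t} {T : porderType d}.
Implicit Types (D E U : T -> Prop).

Definition cofinal E D : Prop := forall x, D x -> exists2 y, E y & x <= y.

Lemma upper_bound_cofinal E D u :
  cofinal E D -> upper_bound E u -> upper_bound D u.
Proof. by move=> cofE ubE x /cofE [y Ey xy]; exact: le_trans xy (ubE y Ey). Qed.

Lemma is_sup_cofinal E D s :
  (forall x, E x -> D x) -> cofinal E D -> is_sup D s -> is_sup E s.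
Proof.
move=> ED cofE [ubs leasts]; split; first by move=> x /ED; exact: ubs.
by move=> u /(upper_bound_cofinal cofE) ubD; exact: leasts.
Qed.

Definition upward_closed U : Prop := forall x y, U x -> x <= y -> U y.

Variables (D U : T -> Prop).
Hypotheses (dirD : directed D) (upU : upward_closed U).
Hypothesis (meetDU : exists x, D x /\ U x).

Lemma cofinal_meet_upward_closed : cofinal (fun x => D x /\ U x) D.
Proof.
have [x0 [Dx0 Ux0]] := meetDU; move=> x Dx.
have [z [Dz [xz x0z]]] := dirD.2 x x0 Dx Dx0.
by exists z => //; split; last exact: upU x0z.
Qed.

Lemma directed_meet_upward_closed : directed (fun x => D x /\ U x).
Proof.
split; first exact: meetDU.
move=> x y [Dx Ux] [Dy _].
have [z [Dz [xz yz]]] := dirD.2 x y Dx Dy.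
by exists z; split; first by split; last exact: upU xz.
Qed.

End CofinalSubset.

Lemma Pstar_upward_closed (d : Order.disp_t) (T : porderType d) :
  upward_closed (@Pstar d T).
Proof.
move=> x z [y wb_yx] xz; exists y => D d0 dirD bD supD zd0.
exact: wb_yx dirD bD supD (le_trans xz zd0).
Qed.

Theorem lemma2p1 (d : Order.disp_t) (T : porderType d) :
  @cond_complete d T ->
  forall D : T -> Prop,
    directed D -> bounded_above D ->
    (exists x, D x /\ Pstar x) ->
    directed (fun x => D x /\ Pstar x) /\
    (exists s, is_sup D s /\ is_sup (fun x => D x /\ Pstar x) s).
Proof.
move=> cc D dirD bD meetDP.
have upP := @Pstar_upward_closed d T.
split; first exact: directed_meet_upward_closed.
have [s supD] := cc D dirD.1 bD.
exists s; split => //.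
apply: is_sup_cofinal supD => [x []//|].
exact: cofinal_meet_upward_closed.
Qed.
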